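(* Let $(X,Y)$ be a minimal divider of a matroid $N$. Then ${\rm cl}(X)\cap {\rm cl}(Y)={\rm cl}(X)\cap {\rm cl}(Y-{\rm cl}(X))$.
   Context: A partition $(X,Y)$ of $E(N)$ is a vertical $k$-separation if $r(X)+r(Y)-r(N)\leq k-1$ and $\min\{r(X),r(Y)\}\geq k$; it is exact if $r(X)+r(Y)-r(N)=k-1$. A divider of $N$ is an exact vertical $k$-separation for some $k$. A divider $(X,Y)$ is minimal if there is no vertical $k'$-separation $(X',Y')$ of $N$ (for any $k'$) with ${\rm cl}(X')\cap {\rm cl}(Y')\subsetneqq {\rm cl}(X)\cap {\rm cl}(Y)$. *)

From mathcomp Require Import all_boot.
Set Implicit Arguments. Unset Strict Implicit. Unset Printing Implicit Defensive.

(* A matroid on the finite ground set T (E(N) = [set: T]) given by its rank function. *)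
Record matroid (T : finType) := Matroid {
  rank :> {set T} -> nat;
  rank_le_card : forall A : {set T}, rank A <= #|A|;
  rank_mono : forall A B : {set T}, A \subset B -> rank A <= rank B;
  rank_submod : forall A B : {set T},
      rank (A :|: B) + rank (A :&: B) <= rank A + rank B
}.

Section Defs.
Variables (T : finType) (N : matroid T).

Definition cl (A : {set T}) : {set T} := [set e | N (e |: A) == N A].

Definition is_partition (X Y : {set T}) : Prop :=
  X :&: Y = set0 /\ X :|: Y = [set: T].

(* vertical k-separation: r(X)+r(Y)-r(N) <= k-1 and min(r X, r Y) >= k.
   Written without subtraction: r(X)+r(Y)+1 <= r(N)+k. *)
Definition vertical_sep (k : nat) (X Y : {set T}) : Prop :=
  is_partition X Y /\ N X + N Y + 1 <= N [set: T] + k /\ k <= N X /\ k <= N Y.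

Definition exact_vertical_sep (k : nat) (X Y : {set T}) : Prop :=
  vertical_sep k X Y /\ N X + N Y + 1 = N [set: T] + k.

Definition divider (X Y : {set T}) : Prop := exists k, exact_vertical_sep k X Y.

Definition minimal_divider (X Y : {set T}) : Prop :=
  divider X Y /\
  ~ (exists k' (X' Y' : {set T}), vertical_sep k' X' Y' /\
       (cl X' :&: cl Y') \proper (cl X :&: cl Y)).
End Defs.

(* Closing X can only shrink the guts: (cl X, Y - cl X) is again a vertical
   separation, by submodularity applied to this partition, and its guts
   cl X ∩ cl (Y - cl X) are contained in cl X ∩ cl Y by monotonicity of the
   closure.  Minimality of (X, Y) forbids the containment from being proper. *)

From mathcomp Require Import all_boot zify.
Set Implicit Arguments.
Unset Strict Implicit.
Unset Printing Implicit Defensive.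

Section Closure.
Variables (T : finType) (N : matroid T).
Implicit Types (A B S X Y : {set T}) (x : T).

Lemma subset_cl A : A \subset cl N A.
Proof. by apply/subsetP => x xA; rewrite inE (setUidPr _) ?sub1set. Qed.

Lemma clS A B : A \subset B -> cl N A \subset cl N B.
Proof.
move=> sAB; apply/subsetP => x; rewrite !inE => /eqP rAx; apply/eqP.
have := rank_submod N (x |: A) B.
have -> : (x |: A) :|: B = x |: B by rewrite -setUA (setUidPr sAB).
have : N A <= N ((x |: A) :&: B) by apply: rank_mono; rewrite subsetI subsetUr.
have : N B <= N (x |: B) by apply: rank_mono; rewrite subsetUr.
lia.
Qed.

Lemma rank_setU_cl A S : S \subset cl N A -> N (A :|: S) = N A.
Proof.
elim: {S}#|S| {-2}S (erefl #|S|) => [|n IH] S cardS sSclA.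
  by rewrite (cards0_eq cardS) setU0.
case: (set_0Vmem S) => [-> | [x Sx]]; first by rewrite setU0.
have rAS' : N (A :|: S :\ x) = N A.
  apply: IH; last exact: subset_trans (subsetDl S [set x]) sSclA.
  by move: cardS; rewrite (cardsD1 x) Sx => -[].
have : x \in cl N (A :|: S :\ x).
  by apply: subsetP (clS (subsetUl _ _)) _ (subsetP sSclA x Sx).
by rewrite inE rAS' => /eqP <-; rewrite setUCA (setD1K Sx).
Qed.

Lemma rank_cl A : N (cl N A) = N A.
Proof. by rewrite -{1}(setUidPr (subset_cl A)) rank_setU_cl. Qed.

Lemma cl_idem A : cl N (cl N A) = cl N A.
Proof.
apply/eqP; rewrite eqEsubset subset_cl andbT.
apply/subsetP => x; rewrite !inE rank_cl => /eqP rclAx; apply/eqP/anti_leq.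
by rewrite -{1}rclAx !rank_mono ?setUS ?subset_cl ?subsetUr.
Qed.

Lemma rank_partition_ge X Y : is_partition X Y -> N [set: T] <= N X + N Y.
Proof. by case=> _ <-; have := rank_submod N X Y; lia. Qed.

Lemma is_partition_cl_setD X Y :
  is_partition X Y -> is_partition (cl N X) (Y :\: cl N X).
Proof.
case=> _ XUY; split; apply/setP => x;
  rewrite !(in_setI, in_setD, in_setU, in_set0, in_setT).
  by case: (x \in cl N X).
case clXx: (x \in cl N X) => //=.
have : x \in X :|: Y by rewrite XUY inE.
by rewrite inE => /orP[/(subsetP (subset_cl X)) | ->]; rewrite ?clXx.
Qed.

Lemma vertical_sep_cl k X Y :
  vertical_sep N k X Y ->
  exists k', vertical_sep N k' (cl N X) (Y :\: cl N X).
Proof.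
move=> [partXY [rXY [kX kY]]].
have partC := is_partition_cl_setD partXY.
have rE := rank_partition_ge partC.
have rY' : N (Y :\: cl N X) <= N Y by rewrite rank_mono ?subsetDl.
rewrite rank_cl in rE.
exists (N X + N (Y :\: cl N X) + 1 - N [set: T]).
by split=> //; rewrite rank_cl; do !split; lia.
Qed.

End Closure.

Theorem lemma4p2 (T : finType) (N : matroid T) (X Y : {set T}) :
  minimal_divider N X Y ->
  cl N X :&: cl N Y = cl N X :&: cl N (Y :\: cl N X).
Proof.
move=> [[k [sepXY _]] minXY].
have [k' sepC] := vertical_sep_cl sepXY.
have sub : cl N X :&: cl N (Y :\: cl N X) \subset cl N X :&: cl N Y.
  by rewrite setIS // clS // subsetDl.
have notproper : ~~ (cl N X :&: cl N (Y :\: cl N X) \proper cl N X :&: cl N Y).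
  apply/negP => prop; apply: minXY.
  by exists k', (cl N X), (Y :\: cl N X); rewrite cl_idem.
by apply/esym/eqP; rewrite eqEproper sub.
Qed.
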